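(* Let $(\breve N,\breve g,\breve P)$ be a Golden semi-Riemannian manifold. Then $\breve N$ admits no $1$-lightlike radical transversal lightlike submanifold. That is, there is no radical transversal lightlike submanifold $\acute N$ of $\breve N$ with $\operatorname{rank}(\mathrm{Rad}\,T\acute N)=1$.
   Context: A Golden semi-Riemannian manifold $(\breve N,\breve g,\breve P)$ is a semi-Riemannian manifold $(\breve N,\breve g)$ with a $(1,1)$-tensor field $\breve P$ such that $\breve P^2=\breve P+I$ and $\breve g(\breve PX,Y)=\breve g(X,\breve PY)$ for all vector fields $X,Y$. Equivalently, the second condition reads $\breve g(\breve PX,\breve PY)=\breve g(\breve PX,Y)+\breve g(X,Y)$. A lightlike submanifold $(\acute N,g,S(T\acute N),S(T\acute N^\perp))$ of $\breve N$ is an immersed submanifold whose induced metric $g$ is degenerate, with radical distribution $\mathrm{Rad}\,T\acute N=T\acute N\cap T\acute N^\perp$ of constant rank $r\ge1$. It comes with the following bundles: - a non-degenerate screen distribution $S(T\acute N)$, with $T\acute N=\mathrm{Rad}\,T\acute N\perp S(T\acute N)$; - a non-degenerate screen transversal bundle $S(T\acute N^\perp)$, which is a complement of $\mathrm{Rad}\,T\acute N$ in $T\acute N^\perp$; - a lightlike transversal bundle $ltr(T\acute N)$ of rank $r$. The bundle $ltr(T\acute N)$ is orthogonal to $S(T\acute N)$ and $S(T\acute N^\perp)$. For any local basis $\{\xi_i\}$ of $\mathrm{Rad}\,T\acute N$ it is locally spanned by $\{N_i\}$ with $\breve g(N_i,\xi_j)=\delta_{ij}$ and $\breve g(N_i,N_j)=0$.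 Thus $$T\breve N|_{\acute N}=S(T\acute N)\perp[\mathrm{Rad}\,T\acute N\oplus ltr(T\acute N)]\perp S(T\acute N^\perp).$$ Such a submanifold is called $r$-lightlike when $\operatorname{rank}\mathrm{Rad}\,T\acute N=r$. A lightlike submanifold is a radical transversal lightlike submanifold if $\breve P(\mathrm{Rad}\,T\acute N)=ltr(T\acute N)$ and $\breve P(S(T\acute N))=S(T\acute N)$. *)

(* Pointwise (tangent-space) linear-algebra model of a
   Golden semi-Riemannian manifold and of its lightlike submanifolds.
   Vectors of the ambient tangent space are row vectors 'rV[R]_n;
   subspaces are represented, as in mxalgebra, by the row spaces of
   matrices 'M_n. *)
From HB Require Import structures.
From mathcomp Require Import all_boot all_order all_algebra.
Set Implicit Arguments. Unset Strict Implicit. Unset Printing Implicit Defensive.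
Import Order.TTheory GRing.Theory Num.Theory.
Local Open Scope ring_scope.

Section GoldenDefs.
Variables (R : realFieldType) (n : nat).

Definition bform (G : 'M[R]_n) (u v : 'rV[R]_n) : R := (u *m G *m v^T) 0 0.

(* (G, P) : a semi-Riemannian metric (symmetric, non-degenerate, any signature)
   together with a Golden structure P (acting on row vectors by u |-> u *m P):
   P^2 = P + I and g(PX,Y) = g(X,PY). *)
Definition golden_semi_riemannian (G P : 'M[R]_n) : Prop :=
  [/\ G^T = G, G \in unitmx, P *m P = P + 1%:M & P *m G = G *m P^T].

Definition orthsp (G A B : 'M[R]_n) : Prop := A *m G *m B^T = 0.

Definition perpsp (G T : 'M[R]_n) : 'M[R]_n := kermx (T *m G)^T.

Definition radical (G T : 'M[R]_n) : 'M[R]_n := (T :&: perpsp G T)%MS.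

Definition nondeg (G S : 'M[R]_n) : Prop :=
  forall u : 'rV[R]_n, (u <= S)%MS ->
    (forall v : 'rV[R]_n, (v <= S)%MS -> bform G u v = 0) -> u = 0.

(* (T, S(T), S(T^⊥), ltr(T)) is an r-lightlike submanifold (tangent data):
   ST = screen distribution, STp = screen transversal bundle,
   L = lightlike transversal bundle. *)
Definition lightlike_data (G T : 'M[R]_n) (r : nat) (ST STp L : 'M[R]_n) : Prop :=
  [/\ \rank (radical G T) = r /\ (0 < r)%N,
      [/\ mxdirect (radical G T + ST), (radical G T + ST == T)%MS,
          orthsp G (radical G T) ST & nondeg G ST],
      [/\ (STp <= perpsp G T)%MS, mxdirect (radical G T + STp),
          (radical G T + STp == perpsp G T)%MS & nondeg G STp],
      [/\ \rank L = r, orthsp G L ST, orthsp G L STp &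
      (forall xi : 'M[R]_(r, n), row_free xi -> (xi == radical G T)%MS ->
         exists Nm : 'M[R]_(r, n),
           [/\ (Nm == L)%MS, Nm *m G *m xi^T = 1%:M & Nm *m G *m Nm^T = 0])]
    & ((ST + (radical G T + L) + STp == 1%:M)%MS /\
       mxdirect (ST + (radical G T + L) + STp))].

Definition radical_transversal_lightlike (G P T : 'M[R]_n) (r : nat) : Prop :=
  exists ST STp L : 'M[R]_n,
    [/\ lightlike_data G T r ST STp L,
        (radical G T *m P == L)%MS & (ST *m P == ST)%MS].

End GoldenDefs.

(* A radical vector xi spans Rad T, so it is null, and by hypothesis ltr T is
   spanned by P xi.  The Golden identity P^2 = P + I together with the symmetry
   of P gives g(P xi, P xi) = g(P xi, xi) + g(xi, xi) = g(P xi, xi).  Hence if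
   N = a P xi then g(N, N) = a g(N, xi), so the conditions g(N, xi) = 1 and
   g(N, N) = 0 force a = 0, i.e. N = 0, which contradicts g(N, xi) = 1. *)
From HB Require Import structures.
From mathcomp Require Import all_boot all_order all_algebra.
Set Implicit Arguments. Unset Strict Implicit. Unset Printing Implicit Defensive.
Import Order.TTheory GRing.Theory Num.Theory.
Local Open Scope ring_scope.

Section Bform.
Variables (R : realFieldType) (n : nat) (G : 'M[R]_n).

Lemma bformZl (a : R) (u v : 'rV[R]_n) : bform G (a *: u) v = a * bform G u v.
Proof. by rewrite /bform -!scalemxAl mxE. Qed.

Lemma bformZr (a : R) (u v : 'rV[R]_n) : bform G u (a *: v) = a * bform G u v.
Proof. by rewrite /bform linearZ /= -scalemxAr mxE. Qed.

Lemma perpsp_orth (k l : nat) (T : 'M[R]_n)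
    (X : 'M[R]_(k, n)) (Y : 'M[R]_(l, n)) :
  G^T = G -> (X <= T)%MS -> (Y <= perpsp G T)%MS -> X *m G *m Y^T = 0.
Proof.
move=> GT /submxP[b ->]; rewrite /perpsp sub_kermx trmx_mul GT => /eqP YGT.
have TGY : T *m G *m Y^T = 0.
  by apply: trmx_inj; rewrite !trmx_mul trmxK GT YGT trmx0.
by rewrite -!mulmxA (mulmxA T) TGY mulmx0.
Qed.

End Bform.

Lemma row_basis_of_rank (R : fieldType) (m n r : nat) (A : 'M[R]_(m, n)) :
  \rank A = r -> exists2 X : 'M[R]_(r, n), row_free X & (X == A)%MS.
Proof.
move=> <-; exists (row_base A); first exact: row_base_free.
exact/eqmxP/eq_row_base.
Qed.

Section Golden.
Variables (R : realFieldType) (n : nat) (G P : 'M[R]_n).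
Hypotheses (PP : P *m P = P + 1%:M) (PG : P *m G = G *m P^T).

Lemma golden_metricM : P *m G *m P^T = P *m G + G.
Proof. by rewrite PG -mulmxA -trmx_mul PP linearD /= trmx1 mulmxDr mulmx1. Qed.

Lemma bform_golden (u v : 'rV[R]_n) :
  bform G (u *m P) (v *m P) = bform G (u *m P) v + bform G u v.
Proof.
rewrite /bform trmx_mul !mulmxA -(mulmxA u P G) -(mulmxA u (P *m G)).
by rewrite golden_metricM mulmxDr mulmxDl mxE !mulmxA.
Qed.

Lemma golden_null_no_dual (xi N : 'rV[R]_n) :
  bform G xi xi = 0 -> (N <= xi *m P)%MS -> bform G N xi = 1 ->
  bform G N N != 0.
Proof.
move=> xi_null /sub_rVP[a ->].
rewrite !bformZl bformZr bform_golden xi_null addr0 => Nxi1.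
rewrite Nxi1 mulr1; apply: contra_eq_neq Nxi1 => ->.
by rewrite mul0r eq_sym oner_neq0.
Qed.

End Golden.

Theorem mainTheorem1 (R : realFieldType) (n : nat) (G P : 'M[R]_n) :
  golden_semi_riemannian G P ->
  forall T : 'M[R]_n, ~ radical_transversal_lightlike G P T 1.
Proof.
move=> [GT _ PP PG] T [ST [STp [L [[[rkRad _] _ _ [_ _ _ ltr_dual] _] RadP _]]]].
have [xi xi_free xi_Rad] := row_basis_of_rank rkRad.
have [N [NL NG1 NGN0]] := ltr_dual xi xi_free xi_Rad.
have xi_null : bform G xi xi = 0.
  by rewrite /bform (perpsp_orth (T := T) GT) ?mxE //
      (eqmxP xi_Rad) ?capmxSl ?capmxSr.
have N_ltr : (N <= xi *m P)%MS.
  by rewrite (eqmxP NL) (eqmxMr P (eqmxP xi_Rad)) (eqmxP RadP).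
have NGxi : bform G N xi = 1 by rewrite /bform NG1 mxE.
by move: (golden_null_no_dual PP PG xi_null N_ltr NGxi); rewrite /bform NGN0 mxE eqxx.
Qed.
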